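(* For $k=2$ the following equivalences hold in $\{m_1,m_2,m_3\}^*$: $m_1m_3\sim m_3m_1$, $m_1m_2m_2m_3\sim m_2m_3m_1m_2$, $m_1m_2m_3m_2\sim m_2m_1m_2m_3$, $m_1m_1m_2m_2m_2m_3\sim m_2m_3m_1m_1m_2m_2$, and $m_1m_2m_2m_2m_3m_3\sim m_2m_2m_3m_3m_1m_2$. Moreover, $m_1m_2m_2m_2m_3m_3\sim m_2m_2m_3m_3m_1m_2$ cannot be derived from the first three equivalences, i.e. these two words are not related by the smallest congruence containing the first three pairs.
   Context: A system of $2$ stacks in series consists of an input queue, stack 1, stack 2, and an output queue. A state records the contents of each stack and each queue (finitely many distinct labelled elements); there is one additional ''illegal'' state $\varnothing$. Moves: $m_1$ moves the front of the input queue onto stack 1; $m_2$ pops stack 1 and pushes onto stack 2; $m_3$ pops stack 2 and enqueues at the back of the output queue. For a word $w$ and state $s$, $w\ast s$ is obtained by applying the moves left to right, with $w\ast s=\varnothing$ if some move is illegal and $w\ast\varnothing=\varnothing$. For words $x,y$, $x\sim y$ iff $x\ast s=y\ast s$ for every state $s$ (including $\varnothing$). *)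

From HB Require Import structures.
From mathcomp Require Import all_boot.
Set Implicit Arguments. Unset Strict Implicit. Unset Printing Implicit Defensive.

(* Moves of a system of 2 stacks in series. *)
Inductive move := m1 | m2 | m3.
Definition move_eqb (a b : move) : bool :=
  match a, b with m1, m1 | m2, m2 | m3, m3 => true | _, _ => false end.
Lemma move_eqP : Equality.axiom move_eqb.
Proof. by case; case; constructor. Qed.
HB.instance Definition _ := hasDecEq.Build move move_eqP.

(* A state: (input queue, stack 1, stack 2, output queue); elements are
   labelled by naturals.  Queues: front = head of list, back = end of list.
   Stacks: top = head of list. *)
Definition state := (seq nat * seq nat * seq nat * seq nat)%type.

Definition valid_state (s : state) : bool :=
  let: (i, a, b, o) := s in uniq (i ++ a ++ b ++ o).

(* None represents the illegal state. *)
Definition step (m : move) (s : option state) : option state :=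
  match s with
  | None => None
  | Some (i, a, b, o) =>
    match m with
    | m1 => if i is x :: i' then Some (i', x :: a, b, o) else None
    | m2 => if a is x :: a' then Some (i, a', x :: b, o) else None
    | m3 => if b is x :: b' then Some (i, a, b', rcons o x) else None
    end
  end.

(* w * s : apply moves left to right. *)
Fixpoint act (w : seq move) (s : option state) : option state :=
  match w with
  | [::] => s
  | m :: w' => act w' (step m s)
  end.

Definition stack_equiv (x y : seq move) : Prop :=
  forall s : option state,
    (match s with Some t => valid_state t | None => true end) ->
    act x s = act y s.

Inductive derivable (R : seq (seq move * seq move)) : seq move -> seq move -> Prop :=
  | der_rule : forall (u v x y : seq move), (x, y) \in R -> derivable R (u ++ x ++ v) (u ++ y ++ v)
  | der_refl : forall x, derivable R x x
  | der_sym : forall x y, derivable R x y -> derivable R y x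
  | der_trans : forall x y z, derivable R x y -> derivable R y z -> derivable R x z.

From mathcomp Require Import all_boot.

(* The five equivalences are checked by computation: the action of a word of
   length at most six only inspects a bounded prefix of the input queue and of
   the two stacks, so after splitting every state according to the shape of
   these prefixes both sides evaluate to the same state.  They even hold for
   all states, not only those with distinct labels.

   Call a word "isolated" for a
   set R of relations if no side of any relation of R occurs in it as a factor.
   No rule of the congruence generated by R can be applied to an isolated word,
   so its congruence class is a singleton.  The word m1 m2 m2 m2 m3 m3 is
   isolated for the first three relations, and it differs from
   m2 m2 m3 m3 m1 m2. *)

Lemma act_equiv (x y : seq move) : act x =1 act y -> stack_equiv x y.
Proof. by move=> Exy s _; exact: Exy. Qed.

(* Split a state (or the illegal state) according to the first two elements
   of its input queue and the first three of each stack; for the words below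
   both actions then compute to the same value. *)
Ltac by_state_shapes :=
  case=> [[[[[|x1 [|x2 i]] [|y1 [|y2 [|y3 a]]]] [|z1 [|z2 [|z3 b]]]] o]|];
  reflexivity.

(* Loading the input and emptying stack 2 act on disjoint components. *)
Lemma m1_m3_comm : act [:: m1; m3] =1 act [:: m3; m1].
Proof. by_state_shapes. Qed.

Lemma rel_m1m2m2m3 : act [:: m1; m2; m2; m3] =1 act [:: m2; m3; m1; m2].
Proof. by_state_shapes. Qed.

Lemma rel_m1m2m3m2 : act [:: m1; m2; m3; m2] =1 act [:: m2; m1; m2; m3].
Proof. by_state_shapes. Qed.

Lemma rel_m1m1m2m2m2m3 :
  act [:: m1; m1; m2; m2; m2; m3] =1 act [:: m2; m3; m1; m1; m2; m2].
Proof. by_state_shapes. Qed.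

Lemma rel_m1m2m2m2m3m3 :
  act [:: m1; m2; m2; m2; m3; m3] =1 act [:: m2; m2; m3; m3; m1; m2].
Proof. by_state_shapes. Qed.

Section IsolatedWords.

Variable R : seq (seq move * seq move).

Definition isolated (w : seq move) : bool :=
  all (fun r => ~~ infix r.1 w && ~~ infix r.2 w) R.

Lemma rule_not_isolated (u v x y : seq move) :
  (x, y) \in R -> ~~ isolated (u ++ x ++ v) && ~~ isolated (u ++ y ++ v).
Proof.
move=> xyR; apply/andP; split; apply/negP => /allP /(_ _ xyR) /=;
  by rewrite !infix_infix ?andbF.
Qed.

Lemma derivable_isolated (w w' : seq move) :
  derivable R w w' -> isolated w -> w = w'.
Proof.
have stable a b : derivable R a b ->
    (isolated a -> a = b) /\ (isolated b -> a = b).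
  elim=> {a b} [u v x y xyR | x | x y _ [IHl IHr] | x y z _ [IHl1 IHr1] _ [IHl2 IHr2]].
  - by have /andP[/negPf-> /negPf->] := rule_not_isolated u v _ _ xyR.
  - by [].
  - by split=> [/IHr | /IHl] ->.
  - split=> [isox | isoz].
      by have xy := IHl1 isox; rewrite xy IHl2 // -xy.
    by have yz := IHr2 isoz; rewrite -yz IHr1 // yz.
by move=> /stable[].
Qed.

End IsolatedWords.

Theorem mainTheorem9 :
  stack_equiv [:: m1; m3] [:: m3; m1] /\
  stack_equiv [:: m1; m2; m2; m3] [:: m2; m3; m1; m2] /\
  stack_equiv [:: m1; m2; m3; m2] [:: m2; m1; m2; m3] /\
  stack_equiv [:: m1; m1; m2; m2; m2; m3] [:: m2; m3; m1; m1; m2; m2] /\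
  stack_equiv [:: m1; m2; m2; m2; m3; m3] [:: m2; m2; m3; m3; m1; m2] /\
  ~ derivable [:: ([:: m1; m3], [:: m3; m1]);
                  ([:: m1; m2; m2; m3], [:: m2; m3; m1; m2]);
                  ([:: m1; m2; m3; m2], [:: m2; m1; m2; m3])]
      [:: m1; m2; m2; m2; m3; m3] [:: m2; m2; m3; m3; m1; m2].
Proof.
do !split; try apply: act_equiv.
- exact: m1_m3_comm.
- exact: rel_m1m2m2m3.
- exact: rel_m1m2m3m2.
- exact: rel_m1m1m2m2m2m3.
- exact: rel_m1m2m2m2m3m3.
by move/derivable_isolated/(_ isT).
Qed.
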